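(* If $\pi\in\mathrm{SR}^2$, then $\mathrm{TD}(\pi,\mathrm{R}\Pi^2)\le3$.
   Context: Fix a countably infinite set $X$ of variables and an alphabet $\Sigma$ disjoint from $X$; here $|\Sigma|=2$. A pattern is a nonempty finite string over $X\cup\Sigma$; $\Pi^z$ is the class of all patterns over an alphabet of size $z$. A substitution is a morphism $h:(X\cup\Sigma)^*\to\Sigma^*$ fixing every letter; $L(\pi)$, the erasing pattern language, is the set of all $h(\pi)$. A pattern is regular if each variable occurs at most once; $\mathrm{R}\Pi^z$ is the class of regular patterns in $\Pi^z$. A pattern is simple block-regular if it has the shape $X_1a_1X_2\cdots a_{n-1}X_n$ with $X_i\in X^+$, $a_i\in\Sigma$, each $X_i$ containing a variable occurring in no other block; $\mathrm{SR}^z$ is the class of simple block-regular patterns in $\Pi^z$. A labelled example is $(w,\pm)$ with $w\in\Sigma^*$; a teaching set for $\pi$ w.r.t. a class $\Pi$ is a set $T$ of labelled examples consistent with $\pi$ ($w\in L(\pi)$ iff the label is $+$) such that every $\tau\in\Pi$ consistent with $T$ has $L(\tau)=L(\pi)$; $\mathrm{TD}(\pi,\Pi)$ is the minimum size of such a set. *)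

From HB Require Import structures.
From mathcomp Require Import all_boot.
Set Implicit Arguments. Unset Strict Implicit. Unset Printing Implicit Defensive.

(* Alphabet Sigma with |Sigma| = 2 is [bool]; variables X are indexed by [nat]. *)
Inductive sym : Type := Var of nat | Let of bool.

Definition sym_eqb (s t : sym) : bool :=
  match s, t with
  | Var x, Var y => x == y
  | Let a, Let b => a == b
  | _, _ => false
  end.

Lemma sym_eqP : Equality.axiom sym_eqb.
Proof.
case=> [x|a] [y|b] /=; try by constructor.
  by apply: (iffP eqP) => [->|[]].
by apply: (iffP eqP) => [->|[]].
Qed.

HB.instance Definition _ := hasDecEq.Build sym sym_eqP.

Definition word := seq bool.

Definition pattern := seq sym.
Definition is_pattern (p : pattern) : bool := p != [::].

Definition subst (h : nat -> word) (p : pattern) : word :=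
  flatten [seq (match s with Var x => h x | Let a => [:: a] end) | s <- p].

(* Erasing pattern language. *)
Definition inL (p : pattern) (w : word) : Prop := exists h, w = subst h p.

Definition regular (p : pattern) : Prop :=
  is_pattern p /\ forall x, count_mem (Var x) p <= 1.

(* Simple block-regular patterns X_1 a_1 X_2 ... a_{n-1} X_n, given by the
   first block and the list of pairs (a_i, X_{i+1}). *)
Definition build_blocks (b0 : seq nat) (rest : seq (bool * seq nat)) : pattern :=
  map Var b0 ++ flatten [seq Let r.1 :: map Var r.2 | r <- rest].

Definition simple_block_regular (p : pattern) : Prop :=
  exists (b0 : seq nat) (rest : seq (bool * seq nat)),
    let blocks := b0 :: map snd rest in
    [/\ p = build_blocks b0 rest,
        all (fun b => b != [::]) blocks &
        forall i, i < size blocks ->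
          exists x, x \in nth [::] blocks i /\
            forall j, j < size blocks -> j != i -> x \notin nth [::] blocks j].

(* Labelled examples (w, true) = (w,+), (w, false) = (w,-). *)
Definition consistent (p : pattern) (T : seq (word * bool)) : Prop :=
  forall e, e \in T -> (inL p e.1 <-> e.2 = true).

Definition teaching_set (C : pattern -> Prop) (p : pattern)
    (T : seq (word * bool)) : Prop :=
  consistent p T /\
  forall q, C q -> consistent q T -> forall w, inL q w <-> inL p w.

Definition TD_le (C : pattern -> Prop) (p : pattern) (k : nat) : Prop :=
  exists T, size T <= k /\ teaching_set C p T.

(* Let s be the word of constant letters of p.

   If every insertion of one letter into s lies in L(p), then L(p) is the set
   of all superwords of s.  Indeed, erasing the variables that occur more than
   once does not change the words of length |s| + 1 in L(p), and the one-letter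
   insertions then force the resulting linear pattern to begin and end with a
   variable and to have constant segments of the form a or ab with a <> b; such
   a pattern generates every superword of its letters.  This language is taught
   by the words pad 0 s and pad 1 s, in which each letter ~c is isolated between
   letters c, together with the longest word of bounded length that does not
   contain s as a subsequence: the two paddings force a consistent regular
   pattern into the same shape with letters embedded in both of them, hence with
   at most as many 0s and 1s as s, and the negative example forces s to embed
   in its letters.

   Otherwise some insertion of c into s is not in L(p).  Then s and the word
   obtained from p by substituting c^(|s|+1) for every variable are positive
   examples, the insertion a negative one, and no regular pattern is consistent
   with them: a regular pattern generating s either can absorb the inserted c
   into the image of a variable, or spells the maximal c-run of s around the
   insertion point by constant letters bordered by ~c or by the ends of the
   pattern, which the long c-runs of the second example rule out. *)

From HB Require Import structures.
From mathcomp Require Import all_boot zify.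
From Stdlib Require Import Classical.
Set Implicit Arguments. Unset Strict Implicit. Unset Printing Implicit Defensive.

Lemma neq_bool (a b : bool) : a != b -> b = ~~ a. Proof. by case: a b => [] []. Qed.

Lemma cat_eq_cat (T : Type) (s1 s2 s3 s4 : seq T) : s1 ++ s2 = s3 ++ s4 ->
  (exists m, s1 = s3 ++ m /\ s4 = m ++ s2) \/
  (exists m, [/\ s3 = s1 ++ m, s2 = m ++ s4 & m <> [::]]).
Proof.
elim: s1 s3 => [|x s1 IH] [|y s3] /=.
- by move=> ->; left; exists [::].
- by move=> ->; right; exists (y :: s3).
- by move=> <-; left; exists (x :: s1).
case=> <- /IH [[m [-> ->]]|[m [-> -> nm]]]; [left|right]; by exists m.
Qed.

Lemma catsI (T : eqType) (s s1 s2 : seq T) : s ++ s1 = s ++ s2 -> s1 = s2.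
Proof. by move/eqP; rewrite eqseq_cat // => /andP[_ /eqP]. Qed.

Lemma catIs (T : eqType) (s s1 s2 : seq T) : s1 ++ s = s2 ++ s -> s1 = s2.
Proof.
move=> E; have /eqP : size s1 == size s2 by rewrite -(eqn_add2r (size s)) -!size_cat E.
by move/eqseq_cat => seqE; move/eqP: E; rewrite seqE => /andP[/eqP].
Qed.

Lemma nth_cat_size (T : Type) (x0 : T) (X L : seq T) k :
  nth x0 (X ++ L) (size X + k) = nth x0 L k.
Proof. by rewrite nth_cat ltnNge leq_addr addKn. Qed.

Lemma suffix_behead (T : eqType) (f s : seq T) x : suffix f s -> suffix f (x :: s).
Proof. by move/suffix_trans; apply; apply: suffix_cons. Qed.

Lemma split_first (T : eqType) (x : T) s : x \in s ->
  exists s1 s2, s = s1 ++ x :: s2 /\ x \notin s1.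
Proof.
elim: s => // y s IH; rewrite inE; case: eqP => [<- _|/eqP nxy /IH [s1 [s2 [-> xs1]]]].
  by exists [::], s.
by exists (y :: s1), s2; rewrite inE negb_or nxy.
Qed.

Lemma subseq_cons_skip (T : eqType) (x : T) s w1 w2 : x \notin w1 ->
  subseq (x :: s) (w1 ++ w2) = subseq (x :: s) w2.
Proof. by elim: w1 => //= y w1 IH; rewrite inE negb_or eq_sym => /andP[/negbTE -> /IH]. Qed.

Lemma notin_nseq (x : bool) w : x \notin w -> w = nseq (size w) (~~ x).
Proof.
move=> xw; apply/all_pred1P/allP => y yw /=.
by apply: contraNT xw; case: x y yw => [] [] //= ? _.
Qed.

(** * Substitutions and the letters of a pattern *)

Lemma subst_cons_var h x q : subst h (Var x :: q) = h x ++ subst h q. Proof. by []. Qed.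
Lemma subst_cons_let h a q : subst h (Let a :: q) = a :: subst h q. Proof. by []. Qed.

Lemma subst_cat h q1 q2 : subst h (q1 ++ q2) = subst h q1 ++ subst h q2.
Proof. by rewrite /subst map_cat flatten_cat. Qed.

Lemma subst_rcons h q a : subst h (rcons q (Let a)) = rcons (subst h q) a.
Proof. by rewrite -!cats1 subst_cat. Qed.

Lemma subst_map_Let h f : subst h (map Let f) = f.
Proof. by elim: f => //= a f IH; rewrite subst_cons_let IH. Qed.

Lemma eq_in_subst h h' q :
  (forall x, Var x \in q -> h x = h' x) -> subst h q = subst h' q.
Proof.
elim: q => [|[x|a] q IH] // eqh.
  rewrite !subst_cons_var eqh ?mem_head // IH // => y qy.
  by apply: eqh; rewrite inE qy orbT.
by rewrite !subst_cons_let IH // => y qy; apply: eqh; rewrite inE qy orbT.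
Qed.

Lemma prefix_subst h q f : prefix (map Let f) q -> prefix f (subst h q).
Proof. by case/prefixP=> q' ->; rewrite subst_cat subst_map_Let prefix_prefix. Qed.

Lemma suffix_subst h q f : suffix (map Let f) q -> suffix f (subst h q).
Proof. by case/suffixP=> q' ->; rewrite subst_cat subst_map_Let suffix_suffix. Qed.

Lemma infix_subst h q f : infix (map Let f) q -> infix f (subst h q).
Proof. by case/infixP=> q1 [q2 ->]; rewrite !subst_cat subst_map_Let infix_infix. Qed.

Definition letters (q : pattern) : word := subst (fun=> [::]) q.

Lemma letters_cat q1 q2 : letters (q1 ++ q2) = letters q1 ++ letters q2.
Proof. exact: subst_cat. Qed.

Lemma letters_cons_var x q : letters (Var x :: q) = letters q. Proof. by []. Qed.
Lemma letters_cons_let a q : letters (Let a :: q) = a :: letters q. Proof. by []. Qed.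

Lemma letters_map_Let f : letters (map Let f) = f. Proof. exact: subst_map_Let. Qed.

Lemma letters_subseq_subst h q : subseq (letters q) (subst h q).
Proof.
elim: q => [|[x|a] q IH] //.
  by rewrite letters_cons_var subst_cons_var; apply: subseq_trans IH (suffix_subseq _ _).
by rewrite letters_cons_let subst_cons_let /= eqxx.
Qed.

Lemma inL_letters q : inL q (letters q). Proof. by exists (fun=> [::]). Qed.

Lemma inL_subseq_letters q w : inL q w -> subseq (letters q) w.
Proof. by case=> h ->; apply: letters_subseq_subst. Qed.

Definition linear_pat (q : pattern) := forall x, count_mem (Var x) q <= 1.

Lemma regular_linear q : regular q -> linear_pat q. Proof. by case. Qed.

Lemma linear_behead s q : linear_pat (s :: q) -> linear_pat q.
Proof. by move=> lq x; have := lq x; rewrite /=; lia. Qed.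

Lemma inL_cons_let a q w : inL q w -> inL (Let a :: q) (a :: w).
Proof. by case=> h ->; exists h. Qed.

Lemma inL_cons_var x q u w : linear_pat (Var x :: q) -> inL q w -> inL (Var x :: q) (u ++ w).
Proof.
move=> lq [h ->]; have xq : Var x \notin q.
  by apply/count_memPn; have := lq x; rewrite /= eqxx; lia.
exists (fun y => if y == x then u else h y); rewrite subst_cons_var eqxx.
congr (_ ++ _); apply: eq_in_subst => y yq.
by case: eqP => // eyx; rewrite -eyx yq in xq.
Qed.

(** * Patterns generating all superwords of their letters *)

Lemma subseq_cons_split (a : bool) s w : subseq (a :: s) w ->
  exists w1 w2, [/\ w = w1 ++ a :: w2, a \notin w1 & subseq s w2].
Proof.
move=> asw; have [w1 [w2 [Ew aw1]]] := split_first (mem_subseq asw (mem_head a s)).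
exists w1, w2; split=> //.
by move: asw; rewrite Ew subseq_cons_skip //= eqxx.
Qed.

Lemma subseq_cons2_split (a b : bool) s w : a != b -> subseq [:: a, b & s] w ->
  exists w1 w2, w = w1 ++ [:: a, b & w2] /\ subseq s w2.
Proof.
move=> nab /subseq_cons_split [w1 [w2 [-> _ /subseq_cons_split [w3 [w4 [-> bw3 sw4]]]]]].
have -> : w3 = nseq (size w3) a.
  by rewrite {1}(notin_nseq bw3); case: a b nab {bw3} => [] [].
exists (w1 ++ nseq (size w3) a), w4; split=> //.
by rewrite -cat_cons -[a :: nseq _ a]/(nseq (size w3).+1 a) -addn1 nseqD -!catA.
Qed.

Definition var_framed (q : pattern) : Prop :=
  q != [::] /\ forall a, ~~ prefix [:: Let a] q /\ ~~ suffix [:: Let a] q.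

Definition short_letter_runs (q : pattern) : Prop :=
  forall a, ~~ infix [:: Let a; Let a] q /\ ~~ infix [:: Let a; Let (~~ a); Let a] q.

Lemma short_letter_runs_behead s q : short_letter_runs (s :: q) -> short_letter_runs q.
Proof.
by move=> sq a; case: (sq a); rewrite !infix_consl !negb_or => /andP[_ ->] /andP[_ ->].
Qed.

Lemma no_trailing_letter_behead s r :
  (forall a, ~~ suffix [:: Let a] (s :: r)) -> forall a, ~~ suffix [:: Let a] r.
Proof. by move=> sr a; apply: contra (sr a); apply: suffix_behead. Qed.

(* The prefix [w0] is left to be absorbed by a variable in front of [r]. *)
Lemma subseq_letters_suffix_inL r w :
  linear_pat r -> (forall a, ~~ suffix [:: Let a] r) -> short_letter_runs r ->
  subseq (letters r) w -> exists w0 v, w = w0 ++ v /\ inL r v.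
Proof.
move: {2}(size r) (leqnn (size r)) => n.
elim: n r w => [|n IH] [|s r] w // rn lr er sr rw;
  try by exists w, [::]; rewrite cats0; split=> //; exists (fun=> [::]).
have er' := no_trailing_letter_behead er.
have sr' := short_letter_runs_behead sr.
case: s rn lr er sr rw => [y|a] rn lr er sr rw.
  have [w0 [v [-> rv]]] := IH r w rn (linear_behead lr) er' sr' rw.
  by exists [::], (w0 ++ v); split=> //; apply: inL_cons_var.
case: r rn lr er sr rw er' sr' => [|[y|b] r] rn lr er sr rw er' sr'.
- by have := er a; rewrite suffix_refl.
- rewrite letters_cons_let letters_cons_var in rw.
  have [w1 [w2 [-> _ rw2]]] := subseq_cons_split rw.
  have [w0 [v [-> rv]]] := IH r w2 (ltnW rn) (linear_behead (linear_behead lr))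
    (no_trailing_letter_behead er') (short_letter_runs_behead sr') rw2.
  exists w1, (a :: w0 ++ v); split=> //.
  by apply: inL_cons_let; apply: inL_cons_var => //; apply: linear_behead lr.
case: r rn lr er sr rw er' sr' => [|[z|c] r] rn lr er sr rw er' sr'.
- by have := er' b; rewrite suffix_refl.
- have nab : a != b.
    by apply: contraNneq (sr a).1 => <-; rewrite infix_consl /= !eqxx.
  rewrite !letters_cons_let letters_cons_var in rw.
  have [w1 [w2 [-> rw2]]] := subseq_cons2_split nab rw.
  have lr' := linear_behead (linear_behead lr).
  have [w0 [v [-> rv]]] := IH r w2 (ltnW (ltnW rn)) (linear_behead lr')
    (no_trailing_letter_behead (no_trailing_letter_behead er'))
    (short_letter_runs_behead (short_letter_runs_behead sr')) rw2.
  exists w1, [:: a, b & w0 ++ v]; split=> //.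
  by do 2!apply: inL_cons_let; apply: inL_cons_var.
case: (eqVneq a b) => [eab|nab].
  by case: (sr a) => /negP[]; apply: prefixW; rewrite -eab /= !eqxx.
case: (eqVneq b c) => [ebc|nbc].
  by case: (sr b) => /negP[]; rewrite infix_consl -ebc /= !eqxx ?prefix0s ?orbT.
have eb := neq_bool nab; have ec : c = a by rewrite (neq_bool nbc) eb negbK.
by case: (sr a) => _ /negP[]; apply: prefixW; rewrite ec -eb /= !eqxx prefix0s.
Qed.

Lemma subseq_letters_inL q w : linear_pat q -> var_framed q -> short_letter_runs q ->
  subseq (letters q) w -> inL q w.
Proof.
case: q => [|[x|a] r] lq [nq fq] sq qw //; last by case: (fq a); rewrite /= eqxx prefix0s.
have er : forall a, ~~ suffix [:: Let a] r.
  by apply: (@no_trailing_letter_behead (Var x)) => a; case: (fq a).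
have [w0 [v [-> rv]]] :=
  subseq_letters_suffix_inL (linear_behead lq) er (short_letter_runs_behead sq) qw.
exact: inL_cons_var.
Qed.

(** * One-letter insertions *)

Definition insert_at (s : word) g c : word := take g s ++ c :: drop g s.

Lemma size_insert_at s g c : size (insert_at s g c) = (size s).+1.
Proof. by rewrite /insert_at size_cat /= addnS -size_cat cat_take_drop. Qed.

Lemma insert_at_catl A s g c : insert_at (A ++ s) (size A + g) c = A ++ insert_at s g c.
Proof. by rewrite /insert_at take_cat drop_cat ltnNge leq_addr /= addKn catA. Qed.

Lemma insert_at_catr s B g c : g <= size s -> insert_at (s ++ B) g c = insert_at s g c ++ B.
Proof.
move=> gs; rewrite /insert_at take_cat drop_cat; case: ltnP => [_|sg]; first by rewrite -catA.
have -> : g = size s by apply/eqP; rewrite eqn_leq gs.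
by rewrite subnn take0 drop0 take_size drop_size cats0 -catA.
Qed.

(* The lengths leave room for one extra letter in [C] or in [D]; the other is
   then equal to its subsequence. *)
Lemma cat_sandwich (A B C D F G : word) : subseq A C -> subseq B D ->
  C ++ F ++ D = A ++ G ++ B -> size G = (size F).+1 -> prefix F G || suffix F G.
Proof.
move=> AC BD E sG.
have leAC : size A <= size C := size_subseq AC.
have leBD : size B <= size D := size_subseq BD.
have := congr1 size E; rewrite !size_cat sG => sE.
case: (ltnP (size A) (size C)) => [ltAC|leCA].
  have eDB : B = D.
    by apply/eqP; rewrite -(size_subseq_leqif BD).2; apply/eqP; change (size B = size D); lia.
  move: E; rewrite eDB !catA => /catIs /cat_eq_cat [[m [_ ->]]|[m [_ FE nm]]].
    by rewrite suffix_suffix orbT.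
  by move/(congr1 size): FE sG; rewrite size_cat; case: m nm => //= *; lia.
have eAC : A = C.
  by apply/eqP; rewrite -(size_subseq_leqif AC).2; apply/eqP; change (size A = size C); lia.
move: E; rewrite eAC => /catsI /esym /cat_eq_cat [[m [-> _]]|[m [FE _ nm]]].
  by rewrite prefix_prefix.
by move/(congr1 size): FE sG; rewrite size_cat; case: m nm => //= *; lia.
Qed.

Lemma not_infix_of_insertions q f k c :
  (forall g c, inL q (insert_at (letters q) g c)) -> k <= size f ->
  ~~ prefix f (insert_at f k c) -> ~~ suffix f (insert_at f k c) -> ~~ infix (map Let f) q.
Proof.
move=> ins kf npre nsuf; apply/infixP => -[X [Y qE]].
have := ins (size (letters X) + k) c.
rewrite qE !letters_cat letters_map_Let insert_at_catl insert_at_catr //.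
case=> h; rewrite !subst_cat subst_map_Let => E.
have := cat_sandwich (letters_subseq_subst h X) (letters_subseq_subst h Y) (esym E).
by rewrite size_insert_at (negbTE npre) (negbTE nsuf) => /(_ erefl).
Qed.

Lemma short_letter_runs_of_insertions q :
  (forall g c, inL q (insert_at (letters q) g c)) -> short_letter_runs q.
Proof.
move=> ins a; split.
  by apply: (@not_infix_of_insertions q [:: a; a] 1 (~~ a)) => //; case: a.
by apply: (@not_infix_of_insertions q [:: a; ~~ a; a] 2 (~~ a)) => //; case: a.
Qed.

Lemma var_framed_of_insertions q :
  (forall g c, inL q (insert_at (letters q) g c)) -> var_framed q.
Proof.
move=> ins; split; first by apply/eqP => q0; have [h] := ins 0 true; rewrite q0.
move=> a; split; apply/negP => qa.
  have [h E] := ins 0 (~~ a); have := @prefix_subst h q [:: a] qa.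
  by rewrite -E /insert_at take0 drop0 /= => /andP[/eqP]; case: a {qa E}.
have [h E] := ins (size (letters q)) (~~ a); have := @suffix_subst h q [:: a] qa.
rewrite -E /insert_at take_size drop_size cats1 -[[:: a]]/(rcons [::] a) suffix_rcons.
by case/andP=> /eqP; case: a {qa E}.
Qed.

Lemma subst_filter (P : pred sym) h q : (forall a, P (Let a)) ->
  (forall x, ~~ P (Var x) -> h x = [::]) -> subst h (filter P q) = subst h q.
Proof.
move=> PL hP; elim: q => [|[x|a] q IH] //=.
  by case: ifP => [_|/negbT/hP hx]; rewrite !subst_cons_var ?hx IH.
by rewrite PL !subst_cons_let IH.
Qed.

Lemma size_subst_count h q x :
  size (letters q) + count_mem (Var x) q * size (h x) <= size (subst h q).
Proof.
elim: q => [|[y|a] q IH]; rewrite ?mul0n //.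
  rewrite letters_cons_var subst_cons_var size_cat /=; case: (eqVneq (Var y) (Var x)) => [[->]|_].
    by rewrite add1n mulSn addnCA leq_add2l.
  by rewrite add0n (leq_trans IH) ?leq_addl.
Qed.

Definition once_in (p : pattern) (s : sym) : bool :=
  if s is Var x then count_mem (Var x) p == 1 else true.

Definition linearize (p : pattern) : pattern := filter (once_in p) p.

Lemma letters_linearize p : letters (linearize p) = letters p.
Proof. exact: subst_filter. Qed.

Lemma linear_linearize p : linear_pat (linearize p).
Proof.
move=> x; rewrite count_filter.
case: (boolP (count_mem (Var x) p == 1)) => [/eqP <-|px]; first by apply: sub_count => s /andP[].
by rewrite (@eq_count _ _ pred0) ?count_pred0 // => s /=; case: eqP => // ->; exact: negbTE.
Qed.

Lemma inL_linearize p w : inL (linearize p) w -> inL p w.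
Proof.
case=> h ->; exists (fun x => if once_in p (Var x) then h x else [::]).
rewrite -[RHS](@subst_filter (once_in p)) // => [|x /=]; last by case: ifP.
by apply: eq_in_subst => x; rewrite mem_filter => /andP[-> _].
Qed.

(* A repeated variable contributes its image twice, so it must be erased here. *)
Lemma inL_linearize_size p w :
  size w = (size (letters p)).+1 -> inL p w -> inL (linearize p) w.
Proof.
move=> sw [h wE]; exists (fun x => if once_in p (Var x) then h x else [::]).
rewrite subst_filter // => [|x /=]; last by case: ifP.
rewrite wE.
apply: eq_in_subst => x xp /=; case: ifP => // /negbT px.
have cx : 1 < count_mem (Var x) p by rewrite ltn_neqAle eq_sym px -has_count has_pred1.
have := size_subst_count h p x; rewrite -wE sw.
case: (h x) => // y s /=; rewrite -[(size (letters p)).+1]addn1 leq_add2l.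
by move/(leq_trans (leq_pmulr _ (ltn0Sn (size s))))/(leq_trans cx).
Qed.

Lemma inL_iff_subseq_letters p : (forall g c, inL p (insert_at (letters p) g c)) ->
  forall w, inL p w <-> subseq (letters p) w.
Proof.
move=> ins w; split; first exact: inL_subseq_letters.
have insl g c : inL (linearize p) (insert_at (letters (linearize p)) g c).
  by rewrite letters_linearize; apply: inL_linearize_size; rewrite ?size_insert_at.
move=> pw; apply: inL_linearize; apply: subseq_letters_inL (linear_linearize p)
  (var_framed_of_insertions insl) (short_letter_runs_of_insertions insl) _.
by rewrite letters_linearize.
Qed.

(** * Long runs of a letter *)

(* The empty pattern counts: it stands for an end of the pattern. *)
Definition ends_in_letter (q : pattern) := q = [::] \/ exists q0 a, q = rcons q0 (Let a).
Definition starts_with_letter (q : pattern) := q = [::] \/ exists a q0, q = Let a :: q0.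

(* Either the factor [z] meets the image of a variable, which can then absorb an
   extra letter, or it is spelled by constant letters of [q] bordered by letters. *)
Lemma subst_factor_cases q h u z v : linear_pat q -> subst h q = u ++ z ++ v ->
  (exists z1 z2, z = z1 ++ z2 /\ forall d, inL q (u ++ z1 ++ d :: z2 ++ v)) \/
  (exists q1 q2, [/\ q = q1 ++ map Let z ++ q2, subst h q1 = u, subst h q2 = v,
                     ends_in_letter q1 & starts_with_letter q2]).
Proof.
elim: q u z => [|[x|a] q IH] u z lq.
- move=> /(congr1 size) /esym/eqP; rewrite !size_cat /= !addn_eq0 !size_eq0.
  by case/and3P=> /eqP-> /eqP-> /eqP->; right; exists [::], [::]; split=> //; left.
- rewrite subst_cons_var => /cat_eq_cat [[m [_ zv]]|[m [-> qm nm]]].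
    left; exists [::], z; split=> // d.
    by rewrite cat0s zv -cat_cons catA; apply: inL_cons_var => //; exists h.
  have [[z1 [z2 [-> ins]]]|[q1 [q2 [-> q1u q2v eq1 sq2]]]] := IH _ _ (linear_behead lq) qm.
    by left; exists z1, z2; split=> // d; rewrite -catA; apply: inL_cons_var.
  right; exists (Var x :: q1), q2; split=> //.
    by rewrite subst_cons_var q1u.
  case: eq1 => [q10|[q0 [a ->]]]; first by move: nm; rewrite -q1u q10.
  by right; exists (Var x :: q0), a.
rewrite subst_cons_let; case: u => [|b u].
  case: z => [|b z]; rewrite !cat0s.
    by move=> <-; right; exists [::], (Let a :: q); split=> //; [left|right; exists a, q].
  case=> <- qz.
  have [[z1 [z2 [-> ins]]]|[q1 [q2 [-> q1u q2v eq1 sq2]]]] := IH [::] z (linear_behead lq) qz.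
    by left; exists (a :: z1), z2; split=> // d; apply: inL_cons_let; exact: ins.
  case: eq1 => [q10|[q0 [c q1E]]].
    by right; exists [::], q2; rewrite q10; split=> //; left.
  by rewrite q1E subst_rcons in q1u; case: (subst h q0) q1u.
case=> <- qu.
have [[z1 [z2 [-> ins]]]|[q1 [q2 [-> q1u q2v eq1 sq2]]]] := IH u z (linear_behead lq) qu.
  by left; exists z1, z2; split=> // d; apply: inL_cons_let; exact: ins.
right; exists (Let a :: q1), q2; split=> //.
  by rewrite subst_cons_let q1u.
right; case: eq1 => [->|[q0 [c ->]]]; first by exists [::], a.
by exists (Let a :: q0), c.
Qed.

(* Every position of [t] at its start or right after a [~~ c] begins a run of at
   least [r] letters [c]; the default [~~ c] of [last] makes the start count. *)
Definition long_runs (c : bool) (r : nat) (t : word) :=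
  forall X Y, t = X ++ Y -> last (~~ c) X = ~~ c -> prefix (nseq r c) Y.

Lemma long_runs_nseq c r n : r <= n -> long_runs c r (nseq n c).
Proof.
move=> rn X Y; case/lastP: X => [|X x].
  by rewrite cat0s => <- _; rewrite -(subnKC rn) nseqD prefix_prefix.
move/(congr1 (fun s => x \in s)); rewrite mem_cat mem_rcons mem_head mem_nseq /=.
by case/andP=> _ /eqP ->; rewrite last_rcons; case: c.
Qed.

Lemma long_runs_cat_cons c r t1 a t2 :
  long_runs c r t1 -> long_runs c r t2 -> long_runs c r (t1 ++ a :: t2).
Proof.
move=> lr1 lr2 X Y /cat_eq_cat [[m [t1E ->]]|[m [-> am nm]]] lX.
  exact/prefix_catl/(lr1 X m).
case: m am nm lX => [//|b m [<- t2E] _]; rewrite last_cat /= => lX.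
apply: (lr2 m Y t2E); case/lastP: m lX {t2E} => [|m x]; by rewrite ?last_rcons.
Qed.

Lemma long_runs_run_size c r t X z Y : long_runs c r t -> t = X ++ z ++ Y ->
  all (pred1 c) z -> last (~~ c) X = ~~ c -> head (~~ c) Y = ~~ c -> r <= size z.
Proof.
move=> lr tE /all_pred1P zE lX hY; rewrite leqNgt; apply/negP => zr.
have := lr X (z ++ Y) tE lX; rewrite -(subnKC (ltnW zr)) nseqD.
rewrite prefix_catr ?size_nseq // => /andP[_].
have [k ->] : exists k, r - size z = k.+1 by exists (r - size z).-1; rewrite prednK // subn_gt0.
by case: Y {tE} hY => [|y Y] /= => [_|->] //; case: c {lr zE lX}.
Qed.

Lemma split_last_run c w :
  exists u z, [/\ w = u ++ z, all (pred1 c) z & last (~~ c) u = ~~ c].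
Proof.
elim/last_ind: w => [|w x [u [z [-> zc lu]]]]; first by exists [::], [::].
case: (eqVneq x c) => [xc|nxc].
  by exists u, (rcons z x); rewrite rcons_cat all_rcons /= xc eqxx.
by exists (rcons (u ++ z) x), [::]; rewrite cats0 last_rcons (neq_bool nxc) negbK.
Qed.

Lemma split_first_run c w :
  exists z v, [/\ w = z ++ v, all (pred1 c) z & head (~~ c) v = ~~ c].
Proof.
elim: w => [|x w [z [v [-> zc hv]]]]; first by exists [::], [::].
case: (eqVneq x c) => [xc|nxc]; first by exists (x :: z), v; rewrite /= xc eqxx.
by exists [::], (x :: z ++ v); rewrite /= (neq_bool nxc) negbK.
Qed.

Lemma last_subst_ends_in_letter h h' q d :
  ends_in_letter q -> last d (subst h q) = last d (subst h' q).
Proof. by case=> [->|[q0 [a ->]]]; rewrite ?subst_rcons ?last_rcons. Qed.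

Lemma head_subst_starts_with_letter h h' q d :
  starts_with_letter q -> head d (subst h q) = head d (subst h' q).
Proof. by case=> [->|[a [q0 ->]]]. Qed.

Lemma inL_insert_at_long_runs q s t g c : linear_pat q -> inL q s -> inL q t ->
  long_runs c (size s).+1 t -> inL q (insert_at s g c).
Proof.
move=> lq [h sE] [h' tE] lr.
have [u [z1 [gE z1c lu]]] := split_last_run c (take g s).
have [z2 [v [dE z2c hv]]] := split_first_run c (drop g s).
have hsE : subst h q = u ++ (z1 ++ z2) ++ v by rewrite -sE -(cat_take_drop g s) gE dE !catA.
have zs : size (z1 ++ z2) <= size s.
  by rewrite -(cat_take_drop g s) gE dE !size_cat leq_add ?leq_addl ?leq_addr.
rewrite /insert_at gE dE -!catA.
have [[z1' [z2' [zE ins]]]|[q1 [q2 [qE q1u q2v e1 s2]]]] := subst_factor_cases lq hsE.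
  suff -> : z1 ++ c :: z2 ++ v = z1' ++ c :: z2' ++ v by apply: ins.
  have zc : all (pred1 c) (z1' ++ z2') by rewrite -zE all_cat z1c.
  move: z1c z2c zc (congr1 size zE); rewrite !all_cat !size_cat.
  move=> /all_pred1P -> /all_pred1P -> /andP[/all_pred1P -> /all_pred1P ->].
  rewrite !size_nseq => sz; rewrite -!cat_cons -[c :: nseq (size z2) c]/(nseq (size z2).+1 c).
  by rewrite -[c :: nseq (size z2') c]/(nseq (size z2').+1 c) !catA -!nseqD !addnS sz.
have := long_runs_run_size lr (X := subst h' q1) (z := z1 ++ z2) (Y := subst h' q2).
rewrite tE qE !subst_cat subst_map_Let all_cat z1c z2c.
rewrite -(last_subst_ends_in_letter h) // q1u lu -(head_subst_starts_with_letter h) // q2v hv.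
by move=> /(_ erefl erefl erefl erefl); rewrite ltnNge zs.
Qed.

Lemma subst_map_Var_nseq r c b : subst (fun=> nseq r c) (map Var b) = nseq (r * size b) c.
Proof. by elim: b => [|x b IH]; rewrite ?muln0 // subst_cons_var IH mulnS nseqD. Qed.

Lemma long_runs_subst_blocks c r t (rest : seq (bool * seq nat)) :
  0 < r -> all (fun b => b != [::]) (map snd rest) -> long_runs c r t ->
  long_runs c r (t ++ subst (fun=> nseq r c) (flatten [seq Let x.1 :: map Var x.2 | x <- rest])).
Proof.
move=> r0; elim: rest t => [|[a b] rest IH] t /=; first by rewrite cats0.
case/andP=> b0 rest0 lr; rewrite subst_cons_let subst_cat subst_map_Var_nseq -cat_cons catA.
apply: IH rest0 (long_runs_cat_cons lr (long_runs_nseq _)).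
by rewrite leq_pmulr // lt0n size_eq0.
Qed.

Lemma long_runs_build_blocks c r b0 rest :
  0 < r -> all (fun b => b != [::]) (b0 :: map snd rest) ->
  long_runs c r (subst (fun=> nseq r c) (build_blocks b0 rest)).
Proof.
move=> r0 /andP[b00 rest0]; rewrite /build_blocks subst_cat subst_map_Var_nseq.
by apply: long_runs_subst_blocks rest0 (long_runs_nseq _); rewrite // leq_pmulr // lt0n size_eq0.
Qed.

(** * Teaching sets *)

Lemma consistent3 p w1 w2 w3 : inL p w1 -> inL p w2 -> ~ inL p w3 ->
  consistent p [:: (w1, true); (w2, true); (w3, false)].
Proof. by move=> p1 p2 p3 e; rewrite !inE => /or3P[] /eqP-> /=; split. Qed.

Lemma consistent_pos q T w : consistent q T -> (w, true) \in T -> inL q w.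
Proof. by move=> cq wT; apply: (cq _ wT).2. Qed.

Lemma consistent_neg q T w : consistent q T -> (w, false) \in T -> ~ inL q w.
Proof. by move=> cq wT /(cq _ wT).1. Qed.

Lemma TD_le_gap p g c t : ~ inL p (insert_at (letters p) g c) -> inL p t ->
  long_runs c (size (letters p)).+1 t -> TD_le regular p 3.
Proof.
move=> np pt lr; exists [:: (letters p, true); (t, true); (insert_at (letters p) g c, false)].
split=> //; split; first exact: consistent3 (inL_letters p) pt np.
move=> q rq cq; exfalso; apply: (consistent_neg cq (w := insert_at (letters p) g c)).
  by rewrite !inE eqxx !orbT.
by apply: inL_insert_at_long_runs (regular_linear rq) _ _ lr;
  apply: consistent_pos cq _; rewrite !inE eqxx ?orbT.
Qed.

Lemma TD_le_universal p : (forall w, inL p w) -> TD_le regular p 3.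
Proof.
move=> pall; exists [:: ([::], true)]; split=> //; split.
  by move=> e; rewrite inE => /eqP-> /=; split.
move=> q rq cq w; split=> // _.
have q0 : letters q = [::].
  by apply/eqP; rewrite -subseq0; apply/inL_subseq_letters/(consistent_pos cq); rewrite inE.
have nof f : f != [::] -> ~~ infix (map Let f) q.
  by move=> f0; apply: contra f0 => /(infix_subst (fun=> [::])); rewrite -/(letters q) q0 infixs0.
apply: subseq_letters_inL (regular_linear rq) _ _ _; rewrite ?q0 ?sub0seq //.
  split=> [|a]; first exact: rq.1.
  by split; apply: contra (nof [:: a] isT); [apply: prefixW | apply: suffixW].
by move=> a; split; [apply: (nof [:: a; a]) | apply: (nof [:: a; ~~ a; a])].
Qed.

Fixpoint pad (c : bool) (s : word) : word :=
  if s is x :: s' then (if x == c then [:: c] else [:: c; x; c]) ++ pad c s' else [::].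

Lemma subseq_pad c s : subseq s (pad c s).
Proof.
elim: s => //= x s IH; case: eqP => [->|/eqP xc] /=; first by rewrite eqxx.
by rewrite (negbTE xc) eqxx; apply: subseq_trans IH (subseq_cons _ _).
Qed.

Lemma head_pad c s d : s != [::] -> head d (pad c s) = c.
Proof. by case: s => //= x s; case: eqP. Qed.

Lemma last_pad c s d : s != [::] -> last d (pad c s) = c.
Proof.
elim: s d => //= x s IH d _; rewrite last_cat.
by case: s IH => [|y s] IH; [case: eqP | apply: IH].
Qed.

Lemma count_pad c s : count_mem (~~ c) (pad c s) = count_mem (~~ c) s.
Proof.
elim: s => //= x s IH; rewrite count_cat IH; case: eqP => [->|/eqP xc] /=.
  by case: c {IH}.
by rewrite (neq_bool xc) negbK; case: x {xc}.
Qed.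

Lemma nth_pad c s i : nth c (pad c s) i = ~~ c ->
  nth c (pad c s) i.+1 = c /\ nth c (pad c s) i.+2 = c.
Proof.
have cN : c <> ~~ c by case: c.
have pad0 s' : nth c (pad c s') 0 = c by case: s' => [|x s'] //=; case: eqP.
elim: s i => [|x s IH] i /=; first by rewrite nth_nil => /cN.
case: eqP => _; first by case: i => [/cN|i /IH].
by case: i => [|[|[|i]]] /=; [move/cN | rewrite pad0 | move/cN | move/IH].
Qed.

Lemma pad_no_infix c s :
  ~~ infix [:: ~~ c; ~~ c] (pad c s) /\ ~~ infix [:: ~~ c; c; ~~ c] (pad c s).
Proof.
split; apply/infixP => -[X [Y E]]; have := @nth_pad c s (size X + 0);
  by rewrite E -!addnS !nth_cat_size /=; case: c {E} => [] [].
Qed.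

Fixpoint avoid_word (K : nat) (s : word) : word :=
  if s is x :: s' then
    nseq K (~~ x) ++ (if s' is [::] then [::] else x :: avoid_word K s')
  else [::].

Lemma notin_nseq_negb (x : bool) K : x \notin nseq K (~~ x).
Proof. by rewrite mem_nseq; case: x; rewrite andbF. Qed.

Lemma avoid_word_not_subseq K s : s != [::] -> ~~ subseq s (avoid_word K s).
Proof.
elim: s => //= x s IH _; rewrite subseq_cons_skip ?notin_nseq_negb //.
by case: s IH => [|y s] IH /=; [case: x | rewrite eqxx; apply: IH].
Qed.

Lemma subseq_avoid_word K s w : s != [::] -> size w <= K -> ~~ subseq s w ->
  subseq w (avoid_word K s).
Proof.
elim: s w => //= x s IH w _ wK sw.
have nseq_sub n : n <= K -> subseq (nseq n (~~ x)) (nseq K (~~ x)).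
  by move=> nK; rewrite -(subnKC nK) nseqD prefix_subseq.
case: (boolP (x \in w)) => [/split_first [w1 [w2 [wE xw1]]]|xw]; last first.
  by rewrite (notin_nseq xw) -[nseq _ _]cats0 cat_subseq ?sub0seq // nseq_sub.
have sw2 : ~~ subseq s w2.
  by apply: contra sw; rewrite wE subseq_cons_skip //= eqxx.
case: s IH sw2 {sw} => [|y s] IH sw2; first by rewrite sub0seq in sw2.
have w1K : size w1 <= K by apply: leq_trans wK; rewrite wE size_cat leq_addr.
rewrite wE (notin_nseq xw1) cat_subseq ?nseq_sub //= eqxx IH //.
by apply: leq_trans wK; rewrite wE size_cat /= -addSnnS leq_addl.
Qed.

Lemma framing_of_pads q s : s != [::] -> q != [::] -> (forall c, inL q (pad c s)) ->
  var_framed q /\ short_letter_runs q.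
Proof.
move=> s0 q0 qpad; split; [split=> // a; split | move=> a; split]; apply/negP => qa.
- have pre c : a = c.
    have [h E] := qpad c; have := prefix_subst h (f := [:: a]) qa.
    by rewrite -E => /prefixP [r pE]; rewrite -(head_pad c a s0) pE.
  by move: (pre true) (pre false) => ->.
- have suf c : a = c.
    have [h E] := qpad c; have := suffix_subst h (f := [:: a]) qa.
    by rewrite -E => /suffixP [r pE]; rewrite -(last_pad c a s0) pE last_cat.
  by move: (suf true) (suf false) => ->.
- have [h E] := qpad (~~ a); have := infix_subst h (f := [:: a; a]) qa.
  by rewrite -E; case: (pad_no_infix (~~ a) s); rewrite negbK => /negP.
have [h E] := qpad (~~ a); have := infix_subst h (f := [:: a; ~~ a; a]) qa.
by rewrite -E; case: (pad_no_infix (~~ a) s); rewrite negbK => _ /negP.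
Qed.

Lemma size_bool (w : word) : size w = count_mem true w + count_mem false w.
Proof. by rewrite -(count_predC (pred1 true)); congr (_ + _); apply: eq_count; case. Qed.

Lemma TD_le_upward_closed p s : s != [::] -> (forall w, inL p w <-> subseq s w) ->
  TD_le regular p 3.
Proof.
move=> s0 pE; set K := size (pad false s).
exists [:: (pad false s, true); (pad true s, true); (avoid_word K s, false)]; split=> //.
split.
  apply: consistent3; [apply/pE; exact: subseq_pad..|].
  by move/pE; apply/negP; apply: avoid_word_not_subseq.
move=> q rq cq.
have qpad c : inL q (pad c s) by apply: consistent_pos cq _; case: c; rewrite !inE eqxx ?orbT.
have qK : ~ inL q (avoid_word K s) by apply: consistent_neg cq _; rewrite !inE eqxx !orbT.
have [qf qr] := framing_of_pads s0 rq.1 qpad.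
have qw w : subseq (letters q) w -> inL q w := subseq_letters_inL (regular_linear rq) qf qr.
have sq : subseq s (letters q).
  apply/negPn/negP => ns; apply: qK; apply: qw; apply: subseq_avoid_word => //.
  exact: size_subseq (inL_subseq_letters (qpad false)).
have cnt b : count_mem b (letters q) <= count_mem b s.
  rewrite -[b]negbK -(count_pad (~~ b) s); apply: leq_count_subseq.
  exact: inL_subseq_letters (qpad _).
have qs : letters q = s.
  apply/esym/eqP; rewrite -(size_subseq_leqif sq).2 eqn_leq size_subseq //.
  by rewrite !size_bool leq_add.
by move=> w; rewrite pE -qs; split; [apply: inL_subseq_letters | apply: qw].
Qed.

Theorem mainTheorem4 (p : pattern) :
  simple_block_regular p -> TD_le regular p 3.
Proof.
case=> b0 [rest [pE blocks _]]; set s := letters p.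
case: (classic (exists g c, ~ inL p (insert_at s g c))) => [[g [c np]]|ins].
  apply: (TD_le_gap np (t := subst (fun=> nseq (size s).+1 c) p)); first by eexists.
  by rewrite -/s pE; apply: long_runs_build_blocks.
have pw : forall w, inL p w <-> subseq s w.
  by apply: inL_iff_subseq_letters => g c; apply: NNPP => np; apply: ins; exists g, c.
case: (eqVneq s [::]) => [s0|s0]; last exact: TD_le_upward_closed s0 pw.
by apply: TD_le_universal => w; apply/pw; rewrite s0 sub0seq.
Qed.
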